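(* Let $\mathcal{V}$ be a quantale, $(T,\eta,\mu)$ a monad on $\mathsf{Set}$ with a single evaluation map $\mathit{ev}_T\colon T\mathcal{V}\to\mathcal{V}$ that is a $T$-algebra, and $F$ a polynomial functor with its recursively defined set $\Lambda^F$ of evaluation maps, where for every constant subfunctor $C_B$ each evaluation map $B\to\mathcal{V}$ is a $T$-algebra homomorphism from the chosen algebra $\zeta\colon TB\to B$ to $\mathit{ev}_T$. Let $\zeta\colon TF\Rightarrow FT$ be constructed recursively as follows: for $C_B$, the chosen $T$-algebra $\zeta\colon TB\to B$; for $\mathrm{Id}$, the identity; for $\prod_{i\in I}F_i$, $\langle\zeta^i\circ T\pi_i\rangle_{i\in I}$; for $F_1+F_2$, $(\zeta^1+\zeta^2)\circ g_{F_1,F_2}$ for a natural transformation $g\colon T((-)+(-))\Rightarrow T(-)+T(-)$. If each such $g$ is well-behaved with respect to $\mathit{ev}_T$, then $$\{e\circ\zeta_{\mathcal{V}}\mid e\in\Lambda^F*\Lambda^T\}=\Lambda^T*\Lambda^F,$$ where $\Lambda^T=\{\mathit{ev}_T\}$, $\Lambda^F*\Lambda^T=\{\mathit{ev}_F\circ F\mathit{ev}_T\mid\mathit{ev}_F\in\Lambda^F\}$ and $\Lambda^T*\Lambda^F=\{\mathit{ev}_T\circ T\mathit{ev}_F\mid\mathit{ev}_F\in\Lambda^F\}$.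
   Context: A quantale is a complete lattice $(\mathcal{V},\sqsubseteq)$ (top $\top$, bottom $\bot$) with a commutative monoid structure $(\mathcal{V},\otimes,k)$ such that $\otimes$ preserves joins in each argument. Polynomial functors are generated by $F::=C_B\mid\mathrm{Id}\mid\prod_{i\in I}F_i\mid F_1+F_2$ ($C_B$ constant at a set $B$, $I$ arbitrary), each with a set $\Lambda^F$ of maps $F\mathcal{V}\to\mathcal{V}$ defined recursively: for $C_B$, an arbitrary chosen set of maps $B\to\mathcal{V}$; for $\mathrm{Id}$, $\{\mathrm{id}_{\mathcal{V}}\}$; for $\prod_{i\in I}F_i$, $\{\mathit{ev}_i\circ\pi'_i\mid i\in I,\mathit{ev}_i\in\Lambda^{F_i}\}$ with $\pi'_i$ the projections; for $F_1+F_2$, $\{[\mathit{ev}_1,\top]\mid\mathit{ev}_1\in\Lambda^{F_1}\}\cup\{[\bot,\mathit{ev}_2]\mid\mathit{ev}_2\in\Lambda^{F_2}\}\cup\{[\bot,\top]\}$, where $\top,\bot$ are constant maps. A natural transformation $g\colon T((-)+(-))\Rightarrow T(-)+T(-)$ is well-behaved with respect to $\mathit{ev}_T$ if for all sets $X_1,X_2$ and maps $f_i\colon X_i\to\mathcal{V}$: $\mathit{ev}_T\circ T[f_1,\top_{X_2}]=[\mathit{ev}_T\circ Tf_1,\top_{TX_2}]\circ g_{X_1,X_2}$, $\mathit{ev}_T\circ T[\bot_{X_1},f_2]=[\bot_{TX_1},\mathit{ev}_T\circ Tf_2]\circ g_{X_1,X_2}$, and $\mathit{ev}_T\circ T[\bot_{X_1},\top_{X_2}]=[\bot_{TX_1},\top_{TX_2}]\circ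 g_{X_1,X_2}$, where $\top_Z,\bot_Z$ denote the constant maps on $Z$ with values $\top,\bot$. *)

Set Implicit Arguments.

Record quantale := Quantale {
  qcar :> Type;
  qle : qcar -> qcar -> Prop;
  qsup : (qcar -> Prop) -> qcar;
  qtens : qcar -> qcar -> qcar;
  qk : qcar;
  qle_refl : forall x, qle x x;
  qle_trans : forall x y z, qle x y -> qle y z -> qle x z;
  qle_antisym : forall x y, qle x y -> qle y x -> x = y;
  qsup_ub : forall (S : qcar -> Prop) x, S x -> qle x (qsup S);
  qsup_least : forall (S : qcar -> Prop) y, (forall x, S x -> qle x y) -> qle (qsup S) y;
  qtens_assoc : forall x y z, qtens x (qtens y z) = qtens (qtens x y) z;
  qtens_comm : forall x y, qtens x y = qtens y x;
  qtens_unit : forall x, qtens qk x = x;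
  qtens_supl : forall a (S : qcar -> Prop),
      qtens a (qsup S) = qsup (fun y => exists x, S x /\ y = qtens a x);
  qtens_supr : forall a (S : qcar -> Prop),
      qtens (qsup S) a = qsup (fun y => exists x, S x /\ y = qtens x a)
}.

Definition qtop (V : quantale) : V := qsup V (fun _ => True).
Definition qbot (V : quantale) : V := qsup V (fun _ => False).

Record monad := Monad {
  mT : Type -> Type;
  mmap : forall X Y : Type, (X -> Y) -> mT X -> mT Y;
  meta : forall X : Type, X -> mT X;
  mmu : forall X : Type, mT (mT X) -> mT X;
  mmap_id : forall X (t : mT X), mmap (fun x => x) t = t;
  mmap_comp : forall X Y Z (f : X -> Y) (g : Y -> Z) (t : mT X),
      mmap (fun x => g (f x)) t = mmap g (mmap f t);
  meta_nat : forall X Y (f : X -> Y) x, mmap f (meta x) = meta (f x);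
  mmu_nat : forall X Y (f : X -> Y) (t : mT (mT X)),
      mmap f (mmu t) = mmu (mmap (mmap f) t);
  mmu_meta_l : forall X (t : mT X), mmu (meta t) = t;
  mmu_meta_r : forall X (t : mT X), mmu (mmap (@meta X) t) = t;
  mmu_assoc : forall X (t : mT (mT (mT X))), mmu (mmu t) = mmu (mmap (@mmu X) t)
}.
Arguments mmap {m X Y}.
Arguments meta {m X}.
Arguments mmu {m X}.

Definition is_algebra (M : monad) (A : Type) (a : mT M A -> A) : Prop :=
  (forall x : A, a (meta x) = x) /\
  (forall t : mT M (mT M A), a (mmu t) = a (mmap a t)).

Definition is_alg_hom (M : monad) (A B : Type) (a : mT M A -> A) (b : mT M B -> B)
  (f : A -> B) : Prop :=
  forall t : mT M A, f (a t) = b (mmap f t).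

(** * Polynomial functors (syntax), carrying the data chosen in the paper:
    for C_B the set of evaluation maps B -> V and the chosen algebra TB -> B;
    for F1 + F2 the transformation g : T(X1+X2) -> TX1 + TX2. *)
Inductive poly (V : Type) (M : monad) : Type :=
| PConst (B : Type) (LB : (B -> V) -> Prop) (zB : mT M B -> B)
| PId
| PProd (Ix : Type) (Fs : Ix -> poly V M)
| PSum (F1 F2 : poly V M)
       (g : forall X1 X2 : Type, mT M (X1 + X2) -> (mT M X1 + mT M X2)%type).

Arguments PId {V M}.

Section PolyDefs.
Variables (V : quantale) (M : monad).

Fixpoint pobj (F : poly V M) (X : Type) : Type :=
  match F with
  | @PConst _ _ B _ _ => B
  | PId => X
  | @PProd _ _ Ix Fs => forall i : Ix, pobj (Fs i) X
  | @PSum _ _ F1 F2 _ => (pobj F1 X + pobj F2 X)%type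
  end.

Fixpoint pmap (F : poly V M) (X Y : Type) (f : X -> Y) : pobj F X -> pobj F Y :=
  match F return pobj F X -> pobj F Y with
  | @PConst _ _ B _ _ => fun b => b
  | PId => f
  | @PProd _ _ Ix Fs => fun x i => pmap (Fs i) f (x i)
  | @PSum _ _ F1 F2 _ => fun x =>
      match x with
      | inl a => inl (pmap F1 f a)
      | inr b => inr (pmap F2 f b)
      end
  end.

Fixpoint inLam (F : poly V M) : (pobj F V -> V) -> Prop :=
  match F return (pobj F V -> V) -> Prop with
  | @PConst _ _ B LB _ => fun e => LB e
  | PId => fun e => e = (fun v => v)
  | @PProd _ _ Ix Fs => fun e =>
      exists (i : Ix) (ei : pobj (Fs i) V -> V),
        inLam (Fs i) ei /\ e = (fun x => ei (x i))
  | @PSum _ _ F1 F2 _ => fun e =>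
      (exists e1, inLam F1 e1 /\
         e = (fun x => match x with inl a => e1 a | inr _ => qtop V end)) \/
      (exists e2, inLam F2 e2 /\
         e = (fun x => match x with inl _ => qbot V | inr b => e2 b end)) \/
      e = (fun x => match x with inl _ => qbot V | inr _ => qtop V end)
  end.

Fixpoint pzeta (F : poly V M) (X : Type) : mT M (pobj F X) -> pobj F (mT M X) :=
  match F return mT M (pobj F X) -> pobj F (mT M X) with
  | @PConst _ _ B _ zB => zB
  | PId => fun t => t
  | @PProd _ _ Ix Fs => fun t i => pzeta (Fs i) X (mmap (fun x => x i) t)
  | @PSum _ _ F1 F2 g => fun t =>
      match g (pobj F1 X) (pobj F2 X) t with
      | inl a => inl (pzeta F1 X a)
      | inr b => inr (pzeta F2 X b)
      end
  end.

Definition sum_map (X1 X2 Y1 Y2 : Type) (f1 : X1 -> Y1) (f2 : X2 -> Y2)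
  (x : X1 + X2) : (Y1 + Y2)%type :=
  match x with inl a => inl (f1 a) | inr b => inr (f2 b) end.

Definition copair (X1 X2 Y : Type) (f1 : X1 -> Y) (f2 : X2 -> Y) (x : X1 + X2) : Y :=
  match x with inl a => f1 a | inr b => f2 b end.

Definition is_natural_g (g : forall X1 X2 : Type, mT M (X1 + X2) -> (mT M X1 + mT M X2)%type)
  : Prop :=
  forall X1 X2 Y1 Y2 (f1 : X1 -> Y1) (f2 : X2 -> Y2) (t : mT M (X1 + X2)),
    g Y1 Y2 (mmap (sum_map f1 f2) t) = sum_map (mmap f1) (mmap f2) (g X1 X2 t).

Definition well_behaved (evT : mT M V -> V)
  (g : forall X1 X2 : Type, mT M (X1 + X2) -> (mT M X1 + mT M X2)%type) : Prop :=
  forall (X1 X2 : Type) (f1 : X1 -> V) (f2 : X2 -> V) (t : mT M (X1 + X2)),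
    evT (mmap (copair f1 (fun _ => qtop V)) t) =
      copair (fun u => evT (mmap f1 u)) (fun _ => qtop V) (g X1 X2 t) /\
    evT (mmap (copair (fun _ => qbot V) f2) t) =
      copair (fun _ => qbot V) (fun u => evT (mmap f2 u)) (g X1 X2 t) /\
    evT (mmap (copair (fun _ => qbot V) (fun _ => qtop V)) t) =
      copair (fun _ => qbot V) (fun _ => qtop V) (g X1 X2 t).

Fixpoint poly_hyps (evT : mT M V -> V) (F : poly V M) : Prop :=
  match F with
  | @PConst _ _ B LB zB =>
      @is_algebra M B zB /\ (forall e, LB e -> @is_alg_hom M B V zB evT e)
  | PId => True
  | @PProd _ _ Ix Fs => forall i : Ix, poly_hyps evT (Fs i)
  | @PSum _ _ F1 F2 g =>
      is_natural_g g /\ well_behaved evT g /\ poly_hyps evT F1 /\ poly_hyps evT F2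
  end.

End PolyDefs.

Arguments is_algebra {M A}.
Arguments is_alg_hom {M A B}.
Arguments inLam {V M} F.
Arguments pobj {V M}.
Arguments pmap {V M} F {X Y}.
Arguments pzeta {V M}.
Arguments poly_hyps {V M}.

(* Every evaluation map of F commutes with zeta: by induction on F, constants
   hold because their evaluation maps are T-algebra homomorphisms, products
   reduce to a component by naturality of T, and for sums the three shapes of
   evaluation maps are exactly the three equations of well-behavedness of g. *)
From Stdlib Require Import FunctionalExtensionality.

Section ZetaCompatibility.
Variables (V : quantale) (M : monad) (evT : mT M V -> V).

Definition eval_commutes (F : poly V M) (e : pobj F V -> V) : Prop :=
  forall t : mT M (pobj F V), e (pmap F evT (pzeta F V t)) = evT (mmap e t).

Lemma eval_commutes_const (B : Type) (LB : (B -> V) -> Prop) (zB : mT M B -> B)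
    (e : B -> V) :
  is_alg_hom zB evT e -> eval_commutes (@PConst V M B LB zB) e.
Proof. intros He t. apply He. Qed.

Lemma eval_commutes_id : eval_commutes PId (fun v => v).
Proof. intro t. simpl. now rewrite mmap_id. Qed.

Lemma eval_commutes_proj (Ix : Type) (Fs : Ix -> poly V M) (i : Ix)
    (ei : pobj (Fs i) V -> V) :
  eval_commutes (Fs i) ei -> eval_commutes (@PProd V M Ix Fs) (fun x => ei (x i)).
Proof. intros Hi t. simpl. now rewrite Hi, <- mmap_comp. Qed.

Section Sum.
Variables (F1 F2 : poly V M)
  (g : forall X1 X2 : Type, mT M (X1 + X2) -> (mT M X1 + mT M X2)%type).
Hypothesis Hg : well_behaved V M evT g.

Lemma eval_commutes_inl (e1 : pobj F1 V -> V) :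
  eval_commutes F1 e1 ->
  eval_commutes (@PSum V M F1 F2 g) (copair e1 (fun _ => qtop V)).
Proof.
  intros H1 t. destruct (Hg _ _ e1 (fun _ : pobj F2 V => qtop V) t) as [W _].
  etransitivity; [| symmetry; exact W]. simpl.
  destruct (g (pobj F1 V) (pobj F2 V) t); simpl; [apply H1 | reflexivity].
Qed.

Lemma eval_commutes_inr (e2 : pobj F2 V -> V) :
  eval_commutes F2 e2 ->
  eval_commutes (@PSum V M F1 F2 g) (copair (fun _ => qbot V) e2).
Proof.
  intros H2 t. destruct (Hg _ _ (fun _ : pobj F1 V => qbot V) e2 t) as [_ [W _]].
  etransitivity; [| symmetry; exact W]. simpl.
  destruct (g (pobj F1 V) (pobj F2 V) t); simpl; [reflexivity | apply H2].
Qed.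

Lemma eval_commutes_bot_top :
  eval_commutes (@PSum V M F1 F2 g) (copair (fun _ => qbot V) (fun _ => qtop V)).
Proof.
  intro t.
  destruct (Hg _ _ (fun _ : pobj F1 V => qbot V) (fun _ : pobj F2 V => qtop V) t)
    as [_ [_ W]].
  etransitivity; [| symmetry; exact W]. simpl.
  now destruct (g (pobj F1 V) (pobj F2 V) t).
Qed.

End Sum.

Lemma inLam_eval_commutes (F : poly V M) :
  poly_hyps evT F -> forall e, inLam F e -> eval_commutes F e.
Proof.
  induction F as [B LB zB | | Ix Fs IH | F1 IH1 F2 IH2 g]; simpl; intros HF e He.
  - now apply eval_commutes_const, HF.
  - subst e. apply eval_commutes_id.
  - destruct He as [i [ei [Hi ->]]]. now apply eval_commutes_proj, IH.
  - destruct HF as [_ [Hg [HF1 HF2]]].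
    destruct He as [[e1 [He1 ->]] | [[e2 [He2 ->]] | ->]].
    + now apply eval_commutes_inl, IH1.
    + now apply eval_commutes_inr, IH2.
    + now apply eval_commutes_bot_top.
Qed.

End ZetaCompatibility.

Theorem mainTheorem11 (V : quantale) (M : monad) (evT : mT M V -> V)
  (HevT : is_algebra evT) (F : poly V M) (HF : poly_hyps evT F) :
  forall h : mT M (pobj F V) -> V,
    (exists evF : pobj F V -> V,
        inLam F evF /\ h = (fun t => evF (pmap F evT (pzeta F V t))))
    <->
    (exists evF : pobj F V -> V,
        inLam F evF /\ h = (fun t => evT (mmap evF t))).
Proof.
  intro h.
  split; intros [evF [HL ->]]; exists evF; split; trivial;
    apply functional_extensionality; intro t;
    now rewrite (@inLam_eval_commutes V M evT F HF evF HL t).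
Qed.
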